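(* Let $m\ge2$ and $f_1,\dots,f_m:X\to\mathbb R_{+\infty}$ with $\bigcap_{i=1}^m\operatorname{dom} f_i\ne\emptyset$. Consider: (i) there is $K>1$ such that $\partial_\varepsilon(\sum_i f_i)(x)\subset\sum_{i=1}^m\partial_{K\varepsilon}f_i(x)$ for all $x\in\bigcap_i\operatorname{dom} f_i$ and $\varepsilon>0$; (ii) there is $K>0$ such that $\operatorname{cl}\big(\sum_{i=1}^m\partial_\varepsilon f_i(x)\big)\subset\sum_{i=1}^m\partial_{K\varepsilon}f_i(x)$ for all $x\in\bigcap_i\operatorname{dom} f_i$ and $\varepsilon>0$; (iii) for all $x\in X$ and $\varepsilon\ge0$, $\partial_\varepsilon(\sum_i f_i)(x)=\bigcap_{\eta>0}\bigcup_{\varepsilon_i\ge0,\ \sum_i\varepsilon_i=\varepsilon+\eta}\sum_{i=1}^m\partial_{\varepsilon_i}f_i(x)$; (iv) $(\sum_{i=1}^m f_i)^*=f_1^*\square\cdots\square f_m^*$; (v) $f_1^*\square\cdots\square f_m^*$ is lower semicontinuous on $\mathcal L$. Then (i)$\Leftrightarrow$(iii)$\Leftrightarrow$(iv)$\Rightarrow$(v)$\Rightarrow$(ii). If moreover, for all $x\in\bigcap_i\operatorname{dom} f_i$ and $\varepsilon\ge0$, $\partial_\varepsilon(\sum_i f_i)(x)=\bigcap_{\eta>0}\operatorname{cl}\big(\bigcup_{\varepsilon_i\ge0,\ \sum_i\varepsilon_i=\varepsilon+\eta}\sum_{i=1}^m\partial_{\varepsilon_i}f_i(x)\big)$ (which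 holds in particular if $\operatorname{cl}(\sum_i\operatorname{epi} f_i^* )=\operatorname{epi}(\sum_i f_i)^*$), then all five properties are equivalent.
   Context: $X$ is a nonempty set; $\mathbb R_{+\infty}=\mathbb R\cup\{+\infty\}$. $\mathcal L$ is a family of functions $X\to\mathbb R$ closed under pointwise addition and real scalar multiplication, equipped with the pointwise convergence topology (weakest topology making all evaluations $l\mapsto l(x)$ continuous); $\mathcal L\times\mathbb R$ has the product topology; $\operatorname{cl}$ denotes closure. For $f:X\to\mathbb R_{+\infty}$: $\operatorname{dom} f=\{x:f(x)<+\infty\}$; $f^*(l)=\sup_{x\in X}(l(x)-f(x))$; $\operatorname{epi} f^*=\{(l,r):f^*(l)\le r\}$. Infimal convolution: $(g_1\square\cdots\square g_m)(l)=\inf\{\sum_i g_i(l_i):l_i\in\mathcal L,\ \sum_i l_i=l\}$. For $\varepsilon\ge0$ and $x\in\operatorname{dom} f$, $\partial_\varepsilon f(x)=\{l\in\mathcal L: f(y)-f(x)-(l(y)-l(x))+\varepsilon\ge0\ \forall y\in X\}$, and $\emptyset$ if $x\notin\operatorname{dom} f$. Sums of sets are Minkowski sums. *)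

From Stdlib Require Import Reals Classical ClassicalEpsilon List.
Open Scope R_scope.

Inductive Rbar : Type := Finite (r : R) | p_infty | m_infty.

Definition Rbar_le (a b : Rbar) : Prop :=
  match a, b with
  | m_infty, _ => True
  | _, p_infty => True
  | Finite x, Finite y => x <= y
  | _, _ => False
  end.

Definition Rbar_lt (a b : Rbar) : Prop := Rbar_le a b /\ a <> b.

(* Addition; +oo is absorbing (the usual "upper" convention for
   infimal convolutions); it is only ever applied to values > -oo here. *)
Definition Rbar_plus (a b : Rbar) : Rbar :=
  match a, b with
  | p_infty, _ | _, p_infty => p_infty
  | m_infty, _ | _, m_infty => m_infty
  | Finite x, Finite y => Finite (x + y)
  end.

Definition R_minus_Rbar (r : R) (a : Rbar) : Rbar :=
  match a with
  | Finite y => Finite (r - y)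
  | p_infty => m_infty
  | m_infty => p_infty
  end.

Definition is_lub_Rbar (P : Rbar -> Prop) (s : Rbar) : Prop :=
  (forall v, P v -> Rbar_le v s) /\
  (forall b, (forall v, P v -> Rbar_le v b) -> Rbar_le s b).

Definition is_glb_Rbar (P : Rbar -> Prop) (s : Rbar) : Prop :=
  (forall v, P v -> Rbar_le s v) /\
  (forall b, (forall v, P v -> Rbar_le b v) -> Rbar_le b s).

Definition Rbar_sup (P : Rbar -> Prop) : Rbar :=
  epsilon (inhabits m_infty) (is_lub_Rbar P).
Definition Rbar_inf (P : Rbar -> Prop) : Rbar :=
  epsilon (inhabits p_infty) (is_glb_Rbar P).

Fixpoint Rbar_sumn (n : nat) (g : nat -> Rbar) : Rbar :=
  match n with
  | O => Finite 0
  | S k => Rbar_plus (Rbar_sumn k g) (g k)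
  end.

Fixpoint rsum (n : nat) (g : nat -> R) : R :=
  match n with
  | O => 0
  | S k => rsum k g + g k
  end.

Section Defs.
Context {X : Type}.

Definition fsum (n : nat) (l : nat -> X -> R) : X -> R :=
  fun x => rsum n (fun i => l i x).

Definition fsumbar (m : nat) (f : nat -> X -> Rbar) : X -> Rbar :=
  fun x => Rbar_sumn m (fun i => f i x).

Definition dom (g : X -> Rbar) (x : X) : Prop := g x <> p_infty.

Definition in_all_dom (m : nat) (f : nat -> X -> Rbar) (x : X) : Prop :=
  forall i, (i < m)%nat -> dom (f i) x.

Definition is_linear_family (L : (X -> R) -> Prop) : Prop :=
  (forall l1 l2, L l1 -> L l2 -> L (fun x => l1 x + l2 x)) /\
  (forall (a : R) l, L l -> L (fun x => a * l x)).

Definition conj (g : X -> Rbar) (l : X -> R) : Rbar :=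
  Rbar_sup (fun v => exists x, v = R_minus_Rbar (l x) (g x)).

Definition infconv (L : (X -> R) -> Prop) (m : nat)
  (g : nat -> (X -> R) -> Rbar) (l : X -> R) : Rbar :=
  Rbar_inf (fun v => exists li : nat -> X -> R,
     (forall i, (i < m)%nat -> L (li i)) /\
     (forall x, fsum m li x = l x) /\
     v = Rbar_sumn m (fun i => g i (li i))).

Definition epi_conj (L : (X -> R) -> Prop) (g : X -> Rbar) (p : (X -> R) * R)
  : Prop := L (fst p) /\ Rbar_le (conj g (fst p)) (Finite (snd p)).

(** ε-subdifferential (empty when x ∉ dom g) *)
Definition esubdiff (L : (X -> R) -> Prop) (g : X -> Rbar) (eps : R) (x : X)
  (l : X -> R) : Prop :=
  L l /\ exists gx, g x = Finite gx /\
    forall y, Rbar_le (Finite (gx + (l y - l x) - eps)) (g y).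

Definition msum (m : nat) (A : nat -> (X -> R) -> Prop) (l : X -> R) : Prop :=
  exists li : nat -> X -> R,
    (forall i, (i < m)%nat -> A i (li i)) /\ (forall x, l x = fsum m li x).

Definition msum2 (m : nat) (A : nat -> (X -> R) * R -> Prop)
  (p : (X -> R) * R) : Prop :=
  exists pi : nat -> (X -> R) * R,
    (forall i, (i < m)%nat -> A i (pi i)) /\
    (forall x, fst p x = fsum m (fun i => fst (pi i)) x) /\
    snd p = rsum m (fun i => snd (pi i)).

(** Pointwise-convergence topology on L: basic neighbourhoods of l are
    {l' ∈ L : |l'(x_j) - l(x_j)| < δ for all x_j ∈ xs}. *)
Definition in_nbhd (xs : list X) (delta : R) (l l' : X -> R) : Prop :=
  forall x, In x xs -> Rabs (l' x - l x) < delta.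

Definition closureL (L : (X -> R) -> Prop) (S : (X -> R) -> Prop)
  (l : X -> R) : Prop :=
  L l /\ forall (xs : list X) (delta : R), 0 < delta ->
    exists l', S l' /\ L l' /\ in_nbhd xs delta l l'.

Definition closureLR (L : (X -> R) -> Prop) (S : (X -> R) * R -> Prop)
  (p : (X -> R) * R) : Prop :=
  L (fst p) /\ forall (xs : list X) (delta : R), 0 < delta ->
    exists p', S p' /\ L (fst p') /\ in_nbhd xs delta (fst p) (fst p')
               /\ Rabs (snd p' - snd p) < delta.

Definition lsc_on (L : (X -> R) -> Prop) (h : (X -> R) -> Rbar) : Prop :=
  forall l, L l -> forall r : R, Rbar_lt (Finite r) (h l) ->
    exists (xs : list X) (delta : R), 0 < delta /\
      forall l', L l' -> in_nbhd xs delta l l' -> Rbar_lt (Finite r) (h l').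

Definition prop_i L m f : Prop :=
  exists K, 1 < K /\ forall x, in_all_dom m f x -> forall eps, 0 < eps ->
    forall l, esubdiff L (fsumbar m f) eps x l ->
      msum m (fun i => esubdiff L (f i) (K * eps) x) l.

Definition prop_ii L m f : Prop :=
  exists K, 0 < K /\ forall x, in_all_dom m f x -> forall eps, 0 < eps ->
    forall l, closureL L (msum m (fun i => esubdiff L (f i) eps x)) l ->
      msum m (fun i => esubdiff L (f i) (K * eps) x) l.

Definition union_sums L m f (s : R) (x : X) (l : X -> R) : Prop :=
  exists epsi : nat -> R, (forall i, (i < m)%nat -> 0 <= epsi i) /\
    rsum m epsi = s /\ msum m (fun i => esubdiff L (f i) (epsi i) x) l.

Definition prop_iii L m f : Prop :=
  forall x eps, 0 <= eps -> forall l,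
    esubdiff L (fsumbar m f) eps x l <->
    (forall eta, 0 < eta -> union_sums L m f (eps + eta) x l).

Definition prop_iv L m f : Prop :=
  forall l, L l -> conj (fsumbar m f) l = infconv L m (fun i => conj (f i)) l.

Definition prop_v L m f : Prop :=
  lsc_on L (infconv L m (fun i => conj (f i))).

Definition closed_formula L m f : Prop :=
  forall x, in_all_dom m f x -> forall eps, 0 <= eps -> forall l,
    esubdiff L (fsumbar m f) eps x l <->
    (forall eta, 0 < eta -> closureL L (union_sums L m f (eps + eta) x) l).

Definition epi_condition L m f : Prop :=
  forall p, closureLR L (msum2 m (fun i => epi_conj L (f i))) p <->
            epi_conj L (fsumbar m f) p.

End Defs.

From Stdlib Require Import Reals Classical ClassicalEpsilon List Lra Lia FunctionalExtensionality.
Open Scope R_scope.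

(* Everything runs through the Fenchel-Young characterisation
   l ∈ ∂_ε g(x)  <->  g^*(l) <= l(x) - g(x) + ε.
   Always (Σ f_i)^* <= f_1^* □ ... □ f_m^*, and a sum of ε_i-subgradients of the f_i
   is a (Σ ε_i)-subgradient of Σ f_i.  Conversely, a decomposition l = Σ l_i that is
   nearly optimal in the infimal convolution splits, by Fenchel-Young applied to each
   f_i, into ε_i-subgradients at x with Σ ε_i close to ε.  So (iv) amounts to the bound
   □ f_i^*(l) <= l(x) - Σ f_i(x) + O(ε) whenever l ∈ ∂_ε(Σ f_i)(x), which is what (i)
   and (iii) provide.  A conjugate is a supremum of evaluations, hence lower
   semicontinuous, which gives (iv) -> (v); lower semicontinuity of □ f_i^* carries the
   same bound through the closure in (ii).  The closed formula, resp. the closedness of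
   Σ epi f_i^*, puts the subgradients of Σ f_i into the closure needed to apply (ii). *)

Definition real (a : Rbar) : R := match a with Finite r => r | _ => 0 end.

Lemma Rbar_le_refl a : Rbar_le a a.
Proof. destruct a; simpl; auto; lra. Qed.

Lemma Rbar_le_trans a b c : Rbar_le a b -> Rbar_le b c -> Rbar_le a c.
Proof. destruct a, b, c; simpl; auto; try tauto; lra. Qed.

Lemma Rbar_le_antisym a b : Rbar_le a b -> Rbar_le b a -> a = b.
Proof. destruct a, b; simpl; try tauto; intros; f_equal; lra. Qed.

Lemma Rbar_not_le a b : ~ Rbar_le a b -> Rbar_le b a.
Proof. destruct a, b; simpl; auto; try tauto; lra. Qed.

Lemma Rbar_lt_not_le a b : Rbar_lt a b <-> ~ Rbar_le b a.
Proof.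
  split.
  - intros [Hab Hne] Hba. apply Hne, Rbar_le_antisym; auto.
  - intros H. split; [apply Rbar_not_le; auto|]. intros ->. apply H, Rbar_le_refl.
Qed.

Lemma Rbar_plus_le a b c d :
  Rbar_le a c -> Rbar_le b d -> Rbar_le (Rbar_plus a b) (Rbar_plus c d).
Proof. destruct a, b, c, d; simpl; auto; try tauto; lra. Qed.

Lemma Rbar_lub_ex (P : Rbar -> Prop) : exists s, is_lub_Rbar P s.
Proof.
  destruct (classic (P p_infty)) as [Hp|Hp].
  { exists p_infty. split; [intros v _; destruct v; simpl; auto|]. intros b Hb. apply Hb, Hp. }
  destruct (classic (exists r, P (Finite r))) as [[r0 Hr0]|Hn].
  - destruct (classic (exists M, forall r, P (Finite r) -> r <= M)) as [[M HM]|HU].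
    + destruct (completeness (fun r => P (Finite r))) as [c [Hc1 Hc2]].
      { exists M. intros r Hr. apply HM, Hr. }
      { exists r0; auto. }
      exists (Finite c). split.
      * intros v Hv. destruct v; simpl; auto; tauto.
      * intros b Hb. destruct b as [b| |]; simpl; auto.
        -- apply Hc2. intros r Hr. apply (Hb _ Hr).
        -- apply (Hb _ Hr0).
    + exists p_infty. split; [intros v _; destruct v; simpl; auto|].
      intros b Hb. destruct b as [b| |]; simpl; auto.
      * apply HU. exists b. intros r Hr. apply (Hb _ Hr).
      * apply (Hb _ Hr0).
  - exists m_infty. split; [|intros b _; simpl; auto].
    intros v Hv. destruct v; simpl; auto. apply Hn; eauto.
Qed.

Lemma Rbar_glb_ex (P : Rbar -> Prop) : exists s, is_glb_Rbar P s.
Proof.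
  destruct (classic (P m_infty)) as [Hp|Hp].
  { exists m_infty. split; [intros v _; destruct v; simpl; auto|]. intros b Hb. apply Hb, Hp. }
  destruct (classic (exists r, P (Finite r))) as [[r0 Hr0]|Hn].
  - destruct (classic (exists M, forall r, P (Finite r) -> M <= r)) as [[M HM]|HU].
    + destruct (completeness (fun r => P (Finite (- r)))) as [c [Hc1 Hc2]].
      { exists (- M). intros r Hr. specialize (HM _ Hr). lra. }
      { exists (- r0). rewrite Ropp_involutive; auto. }
      exists (Finite (- c)). split.
      * intros v Hv. destruct v; simpl; auto; try tauto.
        enough (- r <= c) by lra. apply Hc1. rewrite Ropp_involutive; auto.
      * intros b Hb. destruct b as [b| |]; simpl; auto.
        -- enough (c <= - b) by lra. apply Hc2. intros r Hr. specialize (Hb _ Hr). simpl in Hb. lra.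
        -- apply (Hb _ Hr0).
    + exists m_infty. split; [intros v _; destruct v; simpl; auto|].
      intros b Hb. destruct b as [b| |]; simpl; auto.
      * apply HU. exists b. intros r Hr. apply (Hb _ Hr).
      * apply (Hb _ Hr0).
  - exists p_infty. split; [|intros b _; destruct b; simpl; auto].
    intros v Hv. destruct v; simpl; auto. apply Hn; eauto.
Qed.

Lemma Rbar_sup_spec P : is_lub_Rbar P (Rbar_sup P).
Proof. unfold Rbar_sup. apply epsilon_spec, Rbar_lub_ex. Qed.

Lemma Rbar_inf_spec P : is_glb_Rbar P (Rbar_inf P).
Proof. unfold Rbar_inf. apply epsilon_spec, Rbar_glb_ex. Qed.

Lemma Rbar_inf_le_approx P c eta : Rbar_le (Rbar_inf P) (Finite c) -> 0 < eta ->
  exists v, P v /\ Rbar_le v (Finite (c + eta)).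
Proof.
  intros H Heta. apply NNPP. intros Hn.
  enough (Hle : Rbar_le (Finite (c + eta)) (Rbar_inf P)).
  { pose proof (Rbar_le_trans _ _ _ Hle H) as Hc. simpl in Hc. lra. }
  apply (proj2 (Rbar_inf_spec P)). intros v Hv. apply Rbar_not_le. intros Hle. apply Hn. eauto.
Qed.

Lemma Rbar_le_eps v c M : 0 < M ->
  (forall d, 0 < d -> Rbar_le v (Finite (c + M * d))) -> Rbar_le v (Finite c).
Proof.
  intros HM H. destruct v as [r| |]; simpl; auto.
  - apply Rnot_lt_le. intros Hlt.
    assert (Hd : 0 < (r - c) / (2 * M)) by (apply Rdiv_lt_0_compat; lra).
    specialize (H _ Hd). simpl in H.
    replace (M * ((r - c) / (2 * M))) with ((r - c) / 2) in H by (field; lra). lra.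
  - apply (H 1); lra.
Qed.

Lemma Rbar_sumn_le n a b : (forall i, (i < n)%nat -> Rbar_le (a i) (b i)) ->
  Rbar_le (Rbar_sumn n a) (Rbar_sumn n b).
Proof.
  induction n; intros H; simpl; [lra|].
  apply Rbar_plus_le; [apply IHn; intros; apply H|apply H]; lia.
Qed.

Lemma Rbar_sumn_Finite n g h : (forall i, (i < n)%nat -> g i = Finite (h i)) ->
  Rbar_sumn n g = Finite (rsum n h).
Proof.
  induction n; intros H; simpl; auto.
  rewrite IHn by (intros; apply H; lia). rewrite H by lia. reflexivity.
Qed.

Lemma Rbar_sumn_not_m_infty n g : (forall i, (i < n)%nat -> g i <> m_infty) ->
  Rbar_sumn n g <> m_infty.
Proof.
  induction n; intros H; simpl; [discriminate|].
  pose proof (IHn (fun i Hi => H i ltac:(lia))). pose proof (H n ltac:(lia)).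
  destruct (Rbar_sumn n g), (g n); simpl; congruence.
Qed.

Lemma Rbar_sumn_finite_terms n g : (forall i, (i < n)%nat -> g i <> m_infty) ->
  Rbar_sumn n g <> p_infty -> forall i, (i < n)%nat -> g i = Finite (real (g i)).
Proof.
  induction n; intros H Hp i Hi; [lia|]. simpl in Hp.
  pose proof (Rbar_sumn_not_m_infty n g (fun i Hi => H i ltac:(lia))).
  pose proof (H n ltac:(lia)).
  destruct (Nat.eq_dec i n) as [->|Hne].
  - destruct (Rbar_sumn n g), (g n); simpl in *; congruence.
  - apply IHn; [intros; apply H; lia| |lia].
    destruct (Rbar_sumn n g), (g n); simpl in *; congruence.
Qed.

Lemma R_minus_Rbar_sumn n a g : (forall i, (i < n)%nat -> g i <> m_infty) ->
  R_minus_Rbar (rsum n a) (Rbar_sumn n g) = Rbar_sumn n (fun i => R_minus_Rbar (a i) (g i)).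
Proof.
  induction n; intros H; simpl; [f_equal; ring|].
  rewrite <- IHn by (intros; apply H; lia).
  pose proof (Rbar_sumn_not_m_infty n g (fun i Hi => H i ltac:(lia))). pose proof (H n ltac:(lia)).
  destruct (Rbar_sumn n g), (g n); simpl in *; try congruence. f_equal; ring.
Qed.

Lemma rsum_plus n a b : rsum n (fun i => a i + b i) = rsum n a + rsum n b.
Proof. induction n; simpl; [|rewrite IHn]; ring. Qed.

Lemma rsum_minus n a b : rsum n (fun i => a i - b i) = rsum n a - rsum n b.
Proof. induction n; simpl; [|rewrite IHn]; ring. Qed.

Lemma rsum_const n c : rsum n (fun _ => c) = INR n * c.
Proof. induction n; simpl rsum; [simpl; ring|]. rewrite IHn, S_INR. ring. Qed.

Lemma rsum_nonneg n a : (forall i, (i < n)%nat -> 0 <= a i) -> 0 <= rsum n a.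
Proof.
  induction n; intros H; simpl; [lra|].
  pose proof (H n ltac:(lia)). enough (0 <= rsum n a) by lra. apply IHn; intros; apply H; lia.
Qed.

Lemma rsum_ge_term n a j : (forall i, (i < n)%nat -> 0 <= a i) -> (j < n)%nat ->
  a j <= rsum n a.
Proof.
  induction n; intros H Hj; simpl; [lia|].
  pose proof (H n ltac:(lia)).
  pose proof (rsum_nonneg n a (fun i Hi => H i ltac:(lia))).
  destruct (Nat.eq_dec j n) as [->|Hne]; [lra|].
  enough (a j <= rsum n a) by lra. apply IHn; [intros; apply H|]; lia.
Qed.

Lemma in_nbhd_cons {X} (x : X) xs d d' l l' : d' <= d -> in_nbhd (x :: xs) d' l l' ->
  in_nbhd xs d l l' /\ Rabs (l' x - l x) < d'.
Proof.
  intros Hd H. split; [|apply H; left; auto].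
  intros y Hy. specialize (H y (or_intror Hy)). lra.
Qed.

Lemma closureL_mono {X} L (A B : (X -> R) -> Prop) l :
  (forall l, A l -> B l) -> closureL L A l -> closureL L B l.
Proof.
  intros H [Hl Hc]. split; auto. intros xs d Hd.
  destruct (Hc xs d Hd) as [l' [HA Hl']]. eauto.
Qed.

Lemma lsc_on_ext {X} (L : (X -> R) -> Prop) h h' :
  (forall l, L l -> h l = h' l) -> lsc_on L h -> lsc_on L h'.
Proof.
  intros E Hh l Hl r Hr. rewrite <- E in Hr by auto.
  destruct (Hh l Hl r Hr) as [xs [d [Hd Hn]]]. exists xs, d. split; auto.
  intros l' Hl' Hll'. rewrite <- E by auto. auto.
Qed.

(* The evaluation l' ↦ l'(x) is continuous, so the bound survives passage to the closure. *)
Lemma lsc_closureL_le {X} (L : (X -> R) -> Prop) h S l x c :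
  lsc_on L h -> closureL L S l ->
  (forall l', S l' -> L l' -> Rbar_le (h l') (Finite (l' x + c))) ->
  Rbar_le (h l) (Finite (l x + c)).
Proof.
  intros Hh [Hl Hcl] HS. apply (Rbar_le_eps _ _ 1); [lra|]. intros t Ht.
  apply NNPP. intros Hn. apply Rbar_lt_not_le in Hn.
  destruct (Hh l Hl _ Hn) as [xs [d [Hd Hnear]]].
  destruct (Hcl (x :: xs) (Rmin d t) ltac:(apply Rmin_glb_lt; lra))
    as [l' [HSl' [Hl' Hll']]].
  destruct (in_nbhd_cons x xs d _ l l' (Rmin_l d t) Hll') as [Hxs Hx].
  pose proof (Rmin_r d t). apply Rabs_def2 in Hx.
  apply (proj1 (Rbar_lt_not_le _ _) (Hnear l' Hl' Hxs)).
  apply (Rbar_le_trans _ _ _ (HS l' HSl' Hl')). simpl. lra.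
Qed.

Lemma linear_family_fsum {X} (L : (X -> R) -> Prop) n li : is_linear_family L ->
  (0 < n)%nat -> (forall i, (i < n)%nat -> L (li i)) -> L (fsum n li).
Proof.
  intros [Hadd Hscal] Hn Hli.
  assert (H0 : L (fun _ => 0)).
  { replace (fun _ : X => 0) with (fun x => 0 * li 0%nat x)
      by (apply functional_extensionality; intros; ring).
    apply Hscal, Hli, Hn. }
  clear Hn. induction n; [exact H0|].
  apply Hadd; [apply IHn; intros; apply Hli|apply Hli]; lia.
Qed.

Lemma msum_L {X} (L : (X -> R) -> Prop) n (A : nat -> (X -> R) -> Prop) l :
  is_linear_family L -> (0 < n)%nat -> msum n A l -> (forall i l', A i l' -> L l') -> L l.
Proof.
  intros HL Hn [li [Hli Hl]] HA.
  replace l with (fsum n li) by (apply functional_extensionality; intros; auto).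
  apply linear_family_fsum; auto. intros i Hi. apply (HA i), Hli, Hi.
Qed.

Section Conjugate.
Context {X : Type}.
Implicit Types (g : X -> Rbar) (L : (X -> R) -> Prop).

Lemma conj_ub g l x : Rbar_le (R_minus_Rbar (l x) (g x)) (conj g l).
Proof. apply (proj1 (Rbar_sup_spec _)). eauto. Qed.

Lemma conj_lub g l b :
  (forall x, Rbar_le (R_minus_Rbar (l x) (g x)) b) -> Rbar_le (conj g l) b.
Proof. intros H. apply (proj2 (Rbar_sup_spec _)). intros v [x ->]. auto. Qed.

Lemma conj_not_m_infty g l x : g x <> p_infty -> conj g l <> m_infty.
Proof.
  intros Hx E. pose proof (conj_ub g l x) as H. rewrite E in H.
  destruct (g x); simpl in H; congruence.
Qed.

Lemma conj_gt_witness g l r : (forall y, g y <> m_infty) ->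
  ~ Rbar_le (conj g l) (Finite r) -> exists x a, g x = Finite a /\ r < l x - a.
Proof.
  intros Hg H. apply NNPP. intros Hn. apply H, conj_lub. intros y.
  specialize (Hg y). destruct (g y) as [a| |] eqn:E; simpl; auto; try congruence.
  apply Rnot_lt_le. intros Hlt. apply Hn. eauto.
Qed.

Lemma conj_lsc L g : (forall y, g y <> m_infty) -> lsc_on L (conj g).
Proof.
  intros Hg l Hl r Hr. apply Rbar_lt_not_le in Hr.
  destruct (conj_gt_witness g l r Hg Hr) as [x [a [Hx Hlt]]].
  exists (x :: nil), (l x - a - r). split; [lra|].
  intros l' _ Hll'. apply Rbar_lt_not_le. intros Hle.
  pose proof (Rbar_le_trans _ _ _ (conj_ub g l' x) Hle) as H. rewrite Hx in H. simpl in H.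
  specialize (Hll' x (or_introl eq_refl)). apply Rabs_def2 in Hll'. lra.
Qed.

Lemma esubdiff_conj L g eps x l a : (forall y, g y <> m_infty) -> g x = Finite a ->
  esubdiff L g eps x l <-> L l /\ Rbar_le (conj g l) (Finite (l x - a + eps)).
Proof.
  intros Hg Hx. split.
  - intros [Hl [a' [Hx' Hy]]]. rewrite Hx in Hx'. injection Hx' as <-.
    split; auto. apply conj_lub. intros y. specialize (Hy y). specialize (Hg y).
    destruct (g y); simpl in *; auto; try congruence; lra.
  - intros [Hl Hc]. split; auto. exists a. split; auto. intros y.
    pose proof (Rbar_le_trans _ _ _ (conj_ub g l y) Hc) as H. specialize (Hg y).
    destruct (g y); simpl in *; auto; try congruence; lra.
Qed.

Lemma esubdiff_mono L g e e' x l : e <= e' -> esubdiff L g e x l -> esubdiff L g e' x l.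
Proof.
  intros He [Hl [a [Hx Hy]]]. split; auto. exists a. split; auto.
  intros y. eapply Rbar_le_trans; [|apply Hy]. simpl. lra.
Qed.

Lemma esubdiff_of_forall_gt L g e x l :
  (forall eta, 0 < eta -> esubdiff L g (e + eta) x l) -> esubdiff L g e x l.
Proof.
  intros H. destruct (H 1 ltac:(lra)) as [Hl [a [Hx _]]]. split; auto. exists a. split; auto.
  intros y. destruct (g y) as [r| |] eqn:E; simpl; auto.
  - apply Rnot_lt_le. intros Hlt.
    destruct (H ((a + (l y - l x) - e - r) / 2) ltac:(lra)) as [_ [a' [Hx' Hy']]].
    rewrite Hx in Hx'. injection Hx' as <-. specialize (Hy' y). rewrite E in Hy'.
    simpl in Hy'. lra.
  - destruct (H 1 ltac:(lra)) as [_ [a' [_ Hy']]]. specialize (Hy' y). rewrite E in Hy'. auto.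
Qed.

Lemma esubdiff_closureL L g eps x l : (forall y, g y <> m_infty) ->
  closureL L (esubdiff L g eps x) l -> esubdiff L g eps x l.
Proof.
  intros Hg [Hl Hcl]. destruct (Hcl nil 1 ltac:(lra)) as [_ [[_ [a [Hx _]]] _]].
  split; auto. exists a. split; auto. intros y. specialize (Hg y).
  destruct (g y) as [r| |] eqn:Ey; simpl; auto; try congruence.
  apply Rnot_lt_le. intros Hlt.
  destruct (Hcl (x :: y :: nil) ((a + (l y - l x) - eps - r) / 3) ltac:(lra))
    as [l' [[_ [a' [Hx' Hy']]] [_ Hll']]].
  rewrite Hx in Hx'. injection Hx' as <-. specialize (Hy' y). rewrite Ey in Hy'. simpl in Hy'.
  pose proof (Hll' x (or_introl eq_refl)) as H1.
  pose proof (Hll' y (or_intror (or_introl eq_refl))) as H2.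
  apply Rabs_def2 in H1, H2. lra.
Qed.

End Conjugate.

Section SumOfFunctions.
Variables (X : Type) (L : (X -> R) -> Prop) (m : nat) (f : nat -> X -> Rbar).
Hypothesis HL : is_linear_family L.
Hypothesis Hm : (0 < m)%nat.
Hypothesis Hf : forall i x, (i < m)%nat -> f i x <> m_infty.
Hypothesis Hdom : exists x, in_all_dom m f x.

Local Notation F := (fsumbar m f).
Local Notation infconv_conj := (infconv L m (fun i => conj (f i))).
Local Notation fval x := (rsum m (fun i => real (f i x))).

Lemma fsumbar_not_m_infty y : F y <> m_infty.
Proof. apply Rbar_sumn_not_m_infty. intros i Hi. apply Hf, Hi. Qed.

Lemma f_finite x i : in_all_dom m f x -> (i < m)%nat -> f i x = Finite (real (f i x)).
Proof.
  intros Hd Hi. specialize (Hd i Hi). specialize (Hf i x Hi). unfold dom in Hd.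
  destruct (f i x); simpl; congruence.
Qed.

Lemma fsumbar_finite x : in_all_dom m f x -> F x = Finite (fval x).
Proof. intros Hd. apply Rbar_sumn_Finite. intros i Hi. apply f_finite; auto. Qed.

Lemma in_all_dom_fsumbar x a : F x = Finite a -> in_all_dom m f x.
Proof.
  intros Hx i Hi. unfold dom.
  rewrite (Rbar_sumn_finite_terms m (fun i => f i x) (fun j Hj => Hf j x Hj)); [discriminate| |auto].
  unfold fsumbar in Hx. rewrite Hx. discriminate.
Qed.

Lemma conj_fsumbar_le_sumn l li : (forall x, fsum m li x = l x) ->
  Rbar_le (conj F l) (Rbar_sumn m (fun i => conj (f i) (li i))).
Proof.
  intros Hl. apply conj_lub. intros x. rewrite <- Hl. unfold fsum, fsumbar.
  rewrite R_minus_Rbar_sumn by (intros; apply Hf; auto).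
  apply Rbar_sumn_le. intros i Hi. apply conj_ub.
Qed.

Lemma conj_fsumbar_le_infconv l : Rbar_le (conj F l) (infconv_conj l).
Proof.
  apply (proj2 (Rbar_inf_spec _)). intros v [li [_ [Hl ->]]].
  apply conj_fsumbar_le_sumn, Hl.
Qed.

Lemma sumn_conj_le_of_esubdiff e x li :
  (forall i, (i < m)%nat -> esubdiff L (f i) (e i) x (li i)) ->
  Rbar_le (Rbar_sumn m (fun i => conj (f i) (li i)))
    (Finite (fsum m li x - fval x + rsum m e)).
Proof.
  intros H.
  assert (Hd : in_all_dom m f x).
  { intros i Hi. destruct (H i Hi) as [_ [a [Hx _]]]. unfold dom. rewrite Hx. discriminate. }
  eapply Rbar_le_trans.
  - apply Rbar_sumn_le with (b := fun i => Finite (li i x - real (f i x) + e i)).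
    intros i Hi. apply (proj1 (esubdiff_conj L (f i) (e i) x (li i) _ (fun y => Hf i y Hi)
      (f_finite x i Hd Hi)) (H i Hi)).
  - rewrite (Rbar_sumn_Finite _ _ (fun i => li i x - real (f i x) + e i)) by auto.
    simpl. rewrite rsum_plus, rsum_minus. unfold fsum. lra.
Qed.

Lemma esubdiff_fsumbar_msum e x l :
  msum m (fun i => esubdiff L (f i) (e i) x) l -> esubdiff L F (rsum m e) x l.
Proof.
  intros Hms. assert (Hl : L l) by (apply (msum_L L m _ l HL Hm Hms); intros i l' [? _]; auto).
  destruct Hms as [li [Hli Hlx]].
  assert (Hd : in_all_dom m f x).
  { intros i Hi. destruct (Hli i Hi) as [_ [a [Hx _]]]. unfold dom. rewrite Hx. discriminate. }
  apply (esubdiff_conj L F _ x l _ fsumbar_not_m_infty (fsumbar_finite x Hd)). split; auto.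
  eapply Rbar_le_trans; [apply (conj_fsumbar_le_sumn l li); intros y; rewrite Hlx; auto|].
  rewrite Hlx. apply sumn_conj_le_of_esubdiff, Hli.
Qed.

Lemma infconv_le_msum e x l : msum m (fun i => esubdiff L (f i) (e i) x) l ->
  Rbar_le (infconv_conj l) (Finite (l x - fval x + rsum m e)).
Proof.
  intros [li [Hli Hl]].
  apply Rbar_le_trans with (Rbar_sumn m (fun i => conj (f i) (li i))).
  - apply (proj1 (Rbar_inf_spec _)). exists li. repeat split.
    + intros i Hi. apply (Hli i Hi).
    + intros y. rewrite Hl. reflexivity.
  - rewrite Hl. apply sumn_conj_le_of_esubdiff, Hli.
Qed.

Lemma infconv_le_union_sums s x l : union_sums L m f s x l ->
  Rbar_le (infconv_conj l) (Finite (l x - fval x + s)).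
Proof. intros [e [_ [<- Hms]]]. apply infconv_le_msum, Hms. Qed.

Lemma esubdiff_fsumbar_union_sums s x l : union_sums L m f s x l -> esubdiff L F s x l.
Proof. intros [e [_ [<- Hms]]]. apply esubdiff_fsumbar_msum, Hms. Qed.

Lemma union_sums_msum s t x l : s <= t -> union_sums L m f s x l ->
  msum m (fun i => esubdiff L (f i) t x) l.
Proof.
  intros Hst [e [He [Hse [li [Hli Hl]]]]]. exists li. split; auto.
  intros i Hi. apply (esubdiff_mono _ _ (e i)); auto.
  pose proof (rsum_ge_term m e i He Hi). lra.
Qed.

(* The ε_i are the Fenchel-Young gaps of the l_i at x, each raised by an equal share of
   the slack so that they add up to s exactly. *)
Lemma union_sums_of_sumn_conj_le s x li l :
  in_all_dom m f x -> (forall i, (i < m)%nat -> L (li i)) -> (forall y, fsum m li y = l y) ->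
  Rbar_le (Rbar_sumn m (fun i => conj (f i) (li i))) (Finite (l x - fval x + s)) ->
  union_sums L m f s x l.
Proof.
  intros Hd Hli Hl Hle.
  assert (Hnm : forall i, (i < m)%nat -> conj (f i) (li i) <> m_infty).
  { intros i Hi. apply (conj_not_m_infty _ _ x), Hd, Hi. }
  assert (Hnp : Rbar_sumn m (fun i => conj (f i) (li i)) <> p_infty).
  { intros E. rewrite E in Hle. exact Hle. }
  pose proof (Rbar_sumn_finite_terms m _ Hnm Hnp) as Hc. simpl in Hc.
  set (gap i := real (conj (f i) (li i)) - (li i x - real (f i x))).
  assert (Hgap : forall i, (i < m)%nat -> 0 <= gap i).
  { intros i Hi. pose proof (conj_ub (f i) (li i) x) as H.
    rewrite (Hc i Hi), (f_finite x i Hd Hi) in H. simpl in H. unfold gap. lra. }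
  assert (Hsum : rsum m gap <= s).
  { rewrite (Rbar_sumn_Finite _ _ _ Hc) in Hle. simpl in Hle. rewrite <- (Hl x) in Hle.
    unfold gap. rewrite rsum_minus, rsum_minus. unfold fsum in Hle. lra. }
  assert (Hmpos : 0 < INR m) by (apply lt_0_INR, Hm).
  set (t := (s - rsum m gap) / INR m).
  assert (Ht : 0 <= t) by (apply Rmult_le_pos; [lra|left; apply Rinv_0_lt_compat, Hmpos]).
  exists (fun i => gap i + t). repeat split.
  - intros i Hi. pose proof (Hgap i Hi). lra.
  - rewrite rsum_plus, rsum_const. unfold t. field. lra.
  - exists li. split; [|intros y; symmetry; apply Hl].
    intros i Hi. apply (esubdiff_conj L (f i) _ x (li i) _ (fun y => Hf i y Hi) (f_finite x i Hd Hi)).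
    split; auto. rewrite (Hc i Hi). simpl. unfold gap. lra.
Qed.

Lemma union_sums_of_infconv_le s eta x l : in_all_dom m f x -> 0 < eta ->
  Rbar_le (infconv_conj l) (Finite (l x - fval x + s)) -> union_sums L m f (s + eta) x l.
Proof.
  intros Hd Heta Hle.
  destruct (Rbar_inf_le_approx _ _ eta Hle Heta) as [v [[li [Hli [Hl ->]]] Hv]].
  apply (union_sums_of_sumn_conj_le _ x li); auto.
  eapply Rbar_le_trans; [apply Hv|]. simpl. lra.
Qed.

Lemma conj_fsumbar_eq_infconv l M : L l -> 0 < M ->
  (forall x d, 0 < d -> in_all_dom m f x -> esubdiff L F d x l ->
     Rbar_le (infconv_conj l) (Finite (l x - fval x + M * d))) ->
  conj F l = infconv_conj l.
Proof.
  intros Hl HM Hbound. apply Rbar_le_antisym; [apply conj_fsumbar_le_infconv|].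
  destruct (conj F l) as [c| |] eqn:E.
  - apply (Rbar_le_eps _ _ (M + 1)); [lra|]. intros d Hd.
    destruct (conj_gt_witness F l (c - d) fsumbar_not_m_infty) as [x [a [Hx Hlt]]].
    { rewrite E. simpl. lra. }
    assert (Hd' : in_all_dom m f x) by (apply (in_all_dom_fsumbar x a), Hx).
    assert (Ha : fval x = a).
    { rewrite (fsumbar_finite x Hd') in Hx. injection Hx. auto. }
    assert (Hsub : esubdiff L F d x l).
    { apply (esubdiff_conj L F d x l a fsumbar_not_m_infty Hx).
      rewrite E. simpl. split; auto. lra. }
    pose proof (conj_ub F l x) as Hc. rewrite E, Hx in Hc. simpl in Hc.
    eapply Rbar_le_trans; [apply (Hbound x d Hd Hd' Hsub)|]. simpl. rewrite Ha. lra.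
  - destruct infconv_conj; simpl; auto.
  - destruct Hdom as [x0 Hx0]. exfalso.
    apply (conj_not_m_infty F l x0); auto. rewrite fsumbar_finite; auto. discriminate.
Qed.

Lemma esubdiff_fsumbar_closureL_union_sums s x l :
  closureL L (union_sums L m f s x) l -> esubdiff L F s x l.
Proof.
  intros Hcl. apply esubdiff_closureL; [apply fsumbar_not_m_infty|].
  apply (closureL_mono L (union_sums L m f s x)); [apply esubdiff_fsumbar_union_sums|exact Hcl].
Qed.

Lemma prop_i_iv : prop_i L m f -> prop_iv L m f.
Proof.
  intros [K [HK Hi]] l Hl.
  assert (Hmpos : 0 < INR m) by (apply lt_0_INR, Hm).
  apply (conj_fsumbar_eq_infconv l (INR m * K) Hl); [nra|].
  intros x d Hd Hdx Hsub.
  eapply Rbar_le_trans; [apply (infconv_le_msum (fun _ => K * d)), (Hi x Hdx d Hd l Hsub)|].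
  simpl. rewrite rsum_const. nra.
Qed.

Lemma prop_iii_iv : prop_iii L m f -> prop_iv L m f.
Proof.
  intros Hiii l Hl. apply (conj_fsumbar_eq_infconv l 2 Hl); [lra|].
  intros x d Hd _ Hsub.
  eapply Rbar_le_trans.
  - apply infconv_le_union_sums, (proj1 (Hiii x d ltac:(lra) l) Hsub d Hd).
  - simpl. lra.
Qed.

Lemma prop_iv_iii : prop_iv L m f -> prop_iii L m f.
Proof.
  intros Hiv x eps Heps l. split.
  - intros Hsub eta Heta. pose proof Hsub as [Hl [a [Hx _]]].
    assert (Hd : in_all_dom m f x) by (apply (in_all_dom_fsumbar x a), Hx).
    assert (Ha : fval x = a).
    { rewrite (fsumbar_finite x Hd) in Hx. injection Hx. auto. }
    destruct (proj1 (esubdiff_conj L F eps x l a fsumbar_not_m_infty Hx) Hsub) as [_ Hc].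
    rewrite (Hiv l Hl), <- Ha in Hc.
    apply union_sums_of_infconv_le; auto.
  - intros H. apply esubdiff_of_forall_gt. intros eta Heta.
    apply esubdiff_fsumbar_union_sums, H, Heta.
Qed.

Lemma prop_iii_i : prop_iii L m f -> prop_i L m f.
Proof.
  intros Hiii. exists 2. split; [lra|]. intros x _ eps Heps l Hsub.
  apply (union_sums_msum (eps + eps)); [lra|].
  apply (proj1 (Hiii x eps ltac:(lra) l) Hsub eps Heps).
Qed.

Lemma prop_iv_v : prop_iv L m f -> prop_v L m f.
Proof.
  intros Hiv. apply (lsc_on_ext L (conj F)); [exact Hiv|].
  apply conj_lsc, fsumbar_not_m_infty.
Qed.

Lemma prop_v_ii : prop_v L m f -> prop_ii L m f.
Proof.
  intros Hv. exists (INR m + 1). split; [pose proof (pos_INR m); lra|].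
  intros x Hdx eps Heps l Hcl.
  assert (Hle : Rbar_le (infconv_conj l) (Finite (l x + (- fval x + INR m * eps)))).
  { apply (lsc_closureL_le L _ _ l x _ Hv Hcl). intros l' Hl' _.
    eapply Rbar_le_trans; [apply (infconv_le_msum (fun _ => eps)), Hl'|].
    simpl. rewrite rsum_const. lra. }
  apply (union_sums_msum (INR m * eps + eps)); [lra|].
  apply union_sums_of_infconv_le; auto.
  eapply Rbar_le_trans; [apply Hle|]. simpl. lra.
Qed.

Lemma prop_ii_i : closed_formula L m f -> prop_ii L m f -> prop_i L m f.
Proof.
  intros Hcf [K [HK Hii]]. exists (2 * K + 1). split; [lra|].
  intros x Hdx eps Heps l Hsub.
  assert (Hcl : closureL L (msum m (fun i => esubdiff L (f i) (eps + eps) x)) l).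
  { apply (closureL_mono L (union_sums L m f (eps + eps) x)).
    - intros l'. apply union_sums_msum. lra.
    - apply (proj1 (Hcf x Hdx eps ltac:(lra) l) Hsub eps Heps). }
  destruct (Hii x Hdx (eps + eps) ltac:(lra) l Hcl) as [li [Hli Hl]].
  exists li. split; auto. intros i Hi.
  apply (esubdiff_mono _ _ (K * (eps + eps))); [nra|apply Hli, Hi].
Qed.

Lemma epi_condition_closed_formula : epi_condition L m f -> closed_formula L m f.
Proof.
  intros Hepi x Hdx eps Heps l. split.
  - intros Hsub eta Heta.
    destruct (proj1 (esubdiff_conj L F eps x l _ fsumbar_not_m_infty (fsumbar_finite x Hdx)) Hsub)
      as [Hl Hc].
    destruct (proj2 (Hepi (l, l x - fval x + eps)) (Logic.conj Hl Hc)) as [_ Hcl].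
    split; auto. intros xs d Hd.
    destruct (Hcl (x :: xs) (Rmin d (eta / 4)) ltac:(apply Rmin_glb_lt; lra))
      as [p' [[pi [Hpi [Hfst Hsnd]]] [Hl' [Hll' Hr]]]].
    destruct (in_nbhd_cons x xs d _ l (fst p') (Rmin_l d _) Hll') as [Hxs Hxd].
    pose proof (Rmin_r d (eta / 4)). simpl in Hxd, Hr. apply Rabs_def2 in Hxd, Hr.
    exists (fst p'). split; [|split; auto].
    apply (union_sums_of_sumn_conj_le _ x (fun i => fst (pi i))); [exact Hdx| | |].
    + intros i Hi. apply (proj1 (Hpi i Hi)).
    + intros y. rewrite Hfst. reflexivity.
    + eapply Rbar_le_trans.
      * apply Rbar_sumn_le with (b := fun i => Finite (snd (pi i))).
        intros i Hi. apply (proj2 (Hpi i Hi)).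
      * rewrite (Rbar_sumn_Finite _ _ (fun i => snd (pi i))) by auto.
        simpl. rewrite <- Hsnd. lra.
  - intros H. apply esubdiff_of_forall_gt. intros eta Heta.
    apply esubdiff_fsumbar_closureL_union_sums, H, Heta.
Qed.

End SumOfFunctions.

Theorem mainTheorem11 (X : Type) (L : (X -> R) -> Prop) (m : nat)
  (f : nat -> X -> Rbar)
  (HX : inhabited X)
  (HL : is_linear_family L)
  (Hm : (2 <= m)%nat)
  (Hf : forall i x, (i < m)%nat -> f i x <> m_infty)
  (Hdom : exists x, in_all_dom m f x) :
  (prop_i L m f <-> prop_iii L m f) /\
  (prop_iii L m f <-> prop_iv L m f) /\
  (prop_iv L m f -> prop_v L m f) /\
  (prop_v L m f -> prop_ii L m f) /\
  (closed_formula L m f ->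
     (prop_i L m f <-> prop_ii L m f) /\ (prop_i L m f <-> prop_iii L m f) /\
     (prop_i L m f <-> prop_iv L m f) /\ (prop_i L m f <-> prop_v L m f)) /\
  (epi_condition L m f -> closed_formula L m f).
Proof.
  assert (Hm0 : (0 < m)%nat) by lia.
  assert (I_IV : prop_i L m f -> prop_iv L m f) by (apply prop_i_iv; auto).
  assert (IV_III : prop_iv L m f -> prop_iii L m f) by (apply prop_iv_iii; auto).
  assert (III_IV : prop_iii L m f -> prop_iv L m f) by (apply prop_iii_iv; auto).
  assert (III_I : prop_iii L m f -> prop_i L m f) by apply prop_iii_i.
  assert (IV_V : prop_iv L m f -> prop_v L m f) by (apply prop_iv_v; auto).
  assert (V_II : prop_v L m f -> prop_ii L m f) by (apply prop_v_ii; auto).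
  assert (EPI : epi_condition L m f -> closed_formula L m f)
    by (apply epi_condition_closed_formula; auto).
  assert (II_I : closed_formula L m f -> prop_ii L m f -> prop_i L m f) by apply prop_ii_i.
  intuition.
Qed.
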